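(* Consider Algorithm MWHVC (described in the context) run on a hypergraph $G=(V,E)$ of rank $f$ with nonnegative vertex weights $w$, with parameters $\varepsilon\in(0,1]$, $\beta=\varepsilon/(f+\varepsilon)$ and multiplier $\alpha>1$. For every $i\ge 0$, the values $\delta_i(e)$ form a feasible edge packing, i.e. $\sum_{e\in E(v)}\delta_i(e)\le w(v)$ for every vertex $v\in V$, and $\delta_i(e)\ge 0$ for every hyperedge $e\in E$.
   Context: Let $G=(V,E)$ be a hypergraph: each hyperedge is a nonempty subset of $V$ of size at most $f$ (rank $f$). Vertices have nonnegative weights $w(v)$. For $v\in V$, $E(v)=\{e\in E: v\in e\}$; $\Delta=\max_v |E(v)|\ge 3$. A hyperedge $e$ is covered by $C\subseteq V$ if $e\cap C\neq\emptyset$. The computation is distributed in synchronous rounds on the bipartite network with node set $V\cup E$ and a link between $v$ and $e$ iff $v\in e$. Parameters: $\varepsilon\in(0,1]$, $\beta=\varepsilon/(f+\varepsilon)$, and a multiplier $\alpha>1$. Algorithm MWHVC: Initialize $C\gets\emptyset$ and $E'(v)\gets E(v)$ for every $v$. Iteration $0$: every hyperedge $e$ sets $\mathrm{deal}_0(e)=\beta\cdot\min_{v\in e} w(v)/|E(v)|$ and $\delta_0(e)=\mathrm{deal}_0(e)$. For $i=1,2,\dots$: (a) every vertex $v\notin C$ (not terminated) checks whether $\sum_{e\in E(v)}\delta_{i-1}(e)\ge(1-\beta)w(v)$; if so, $v$ joins $C$, tells every $e\in E'(v)$ that $e$ is covered, and terminates. (b) Every uncovered hyperedge that receives such a message becomes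 covered, informs all its vertices, and terminates. (c) Every vertex $v\notin C$ that is told $e$ is covered sets $E'(v)\gets E'(v)\setminus\{e\}$; if $E'(v)=\emptyset$, $v$ terminates without joining $C$. (d) Every vertex $v\notin C$ sends ''raise'' to all $e\in E'(v)$ if $\sum_{e\in E'(v)}\mathrm{deal}_{i-1}(e)\le(\beta/\alpha)w(v)$, and otherwise sends ''stuck'' to all $e\in E'(v)$. (e) Every uncovered hyperedge $e$ sets $\mathrm{deal}_i(e)=\mathrm{deal}_{i-1}(e)$ if it received some ''stuck'' message, and $\mathrm{deal}_i(e)=\alpha\cdot\mathrm{deal}_{i-1}(e)$ otherwise, and $\delta_i(e)=\delta_{i-1}(e)+\mathrm{deal}_i(e)$. If $e$ becomes covered in iteration $j$, then by convention $\delta_i(e)=\delta_{j-1}(e)$ for all $i\ge j$. *)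

From HB Require Import structures.
From mathcomp Require Import all_boot all_order all_algebra.
Set Implicit Arguments. Unset Strict Implicit. Unset Printing Implicit Defensive.
Import Order.TTheory GRing.Theory Num.Theory.
Local Open Scope ring_scope.

Section MWHVC.
Variables (R : realFieldType) (V : finType) (E : {set {set V}}).
Variables (f : nat) (w : V -> R) (eps alpha : R).

Definition Ev (v : V) : {set {set V}} := [set e in E | v \in e].

Definition beta : R := eps / (f%:R + eps).

Record state := State {
  inC : {set V};
  term : {set V};
  cov : {set {set V}};
  Ep : V -> {set {set V}};
  deal : {set V} -> R;
  delta : {set V} -> R
}.

Definition minratio (e : {set V}) : R :=
  match [pick v in e] with
  | Some v0 => \big[Num.min/(w v0 / #|Ev v0|%:R)]_(v in e) (w v / #|Ev v|%:R)
  | None => 0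
  end.

Definition init : state :=
  State set0 set0 set0 Ev (fun e => beta * minratio e) (fun e => beta * minratio e).

Definition step (s : state) : state :=
  let J := [set v | (v \notin term s) &&
                    ((1 - beta) * w v <= \sum_(e in Ev v) delta s e)] in
  let C' := inC s :|: J in
  let newcov := [set e in E | (e \notin cov s) &&
                   [exists v in J, e \in Ep s v]] in
  let cov' := cov s :|: newcov in
  let Ep' := fun v => if v \in C' then Ep s v else Ep s v :\: newcov in
  let term' := term s :|: J :|:
      [set v | (v \notin C') && (v \notin term s) &&
               [exists e in newcov, v \in e] && (Ep' v == set0)] in
  let stuck := fun e : {set V} => [exists v, [&& v \notin C', v \notin term', e \in Ep' v &
                   (beta / alpha * w v < \sum_(e' in Ep' v) deal s e')]] in
  let deal' := fun e => if (e \in E) && (e \notin cov')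
                        then (if stuck e then deal s e else alpha * deal s e)
                        else deal s e in
  let delta' := fun e => if (e \in E) && (e \notin cov')
                         then delta s e + deal' e else delta s e in
  State C' term' cov' Ep' deal' delta'.

Definition state_at (i : nat) : state := iter i step init.

End MWHVC.

From Pilot Require Import Defs.
From HB Require Import structures.
From mathcomp Require Import all_boot all_order all_algebra.
From mathcomp Require Import ring lra.
Import Order.TTheory GRing.Theory Num.Theory.
Local Open Scope ring_scope.

(* The deltas only grow on uncovered hyperedges, each by its new deal. If v
   does not join C in iteration i then sum_{E(v)} delta_{i-1} < (1 - beta) w(v),
   and its uncovered hyperedges all lie in E'(v); so feasibility follows from
   the invariant sum_{E'(v)} deal <= beta w(v) for every live vertex v. It holds
   initially because deal_0(e) <= beta w(v) / |E(v)| for e in E(v), and it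
   survives an iteration: a vertex reporting "stuck" freezes all its deals, and
   one reporting "raise" had sum_{E'(v)} deal <= (beta / alpha) w(v) before the
   factor alpha. Once v terminates, all of E(v) is covered and the deltas
   around v stay fixed. *)

Lemma ler_sum_subset (R : numDomainType) (I : finType) (A B : {set I})
    (F : I -> R) :
  B \subset A -> {in A, forall i, 0 <= F i} ->
  \sum_(i in B) F i <= \sum_(i in A) F i.
Proof.
move=> sBA F_ge0; rewrite [leRHS](big_setID B) /= (setIidPr sBA) lerDl.
by apply: sumr_ge0 => i /setDP[/F_ge0].
Qed.

Lemma beta_ge0 {R : realFieldType} (f : nat) (eps : R) :
  0 <= eps -> 0 <= beta f eps.
Proof. by move=> eps_ge0; rewrite divr_ge0 // addr_ge0. Qed.

Lemma beta_le1 {R : realFieldType} (f : nat) (eps : R) :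
  0 < eps -> beta f eps <= 1.
Proof.
move=> eps_gt0; have f_eps_gt0 : 0 < f%:R + eps :> R by rewrite ltr_wpDl.
by rewrite ler_pdivrMr // mul1r lerDr.
Qed.

Section Packing.
Variables (R : realFieldType) (V : finType) (E : {set {set V}}).
Variables (f : nat) (w : V -> R) (eps alpha : R).
Hypothesis w_ge0 : forall v, 0 <= w v.
Hypotheses (ge0_beta : 0 <= beta f eps) (le1_beta : beta f eps <= 1).
Hypothesis alpha_ge1 : 1 <= alpha.

Local Notation beta := (beta f eps).
Local Notation Ev := (Ev E).
Local Notation minratio := (minratio E w).
Local Notation state := (state R V).

Let alpha_gt0 : 0 < alpha. Proof. exact: lt_le_trans ltr01 alpha_ge1. Qed.

Lemma minratio_ge0 e : 0 <= minratio e.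
Proof.
rewrite /Defs.minratio; case: pickP => // v0 _.
apply: (big_ind (fun x => 0 <= x)) => [|x y x_ge0 y_ge0|v _].
- by rewrite divr_ge0.
- by rewrite le_min x_ge0 y_ge0.
- by rewrite divr_ge0.
Qed.

Lemma minratio_le (e : {set V}) v : v \in e -> minratio e <= w v / #|Ev v|%:R.
Proof.
move=> ve; rewrite /Defs.minratio; case: pickP => [v0 _|no_pick].
  by rewrite (bigD1 v) //= ge_min lexx.
by rewrite no_pick in ve.
Qed.

Lemma sum_minratio_le v : \sum_(e in Ev v) minratio e <= w v.
Proof.
apply: (@le_trans _ _ (\sum_(e in Ev v) w v / #|Ev v|%:R)).
  by apply: ler_sum => e /setIdP[_ /minratio_le].
rewrite sumr_const; have [->|Ev_neq0] := eqVneq #|Ev v| 0%N; first exact: w_ge0.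
by rewrite -[_ *+ _]mulr_natr divfK ?pnatr_eq0.
Qed.

Section Step.
Variable s : state.

Definition joiners := [set v | (v \notin term s) &&
                        ((1 - beta) * w v <= \sum_(e in Ev v) delta s e)].
Definition C_next := inC s :|: joiners.
Definition covered_now := [set e in E | (e \notin cov s) &&
                            [exists v in joiners, e \in Ep s v]].
Definition cov_next := cov s :|: covered_now.
Definition Ep_next v :=
  if v \in C_next then Ep s v else Ep s v :\: covered_now.
Definition term_next := term s :|: joiners :|:
  [set v | (v \notin C_next) && (v \notin term s) &&
           [exists e in covered_now, v \in e] && (Ep_next v == set0)].
Definition stuck e := [exists v, [&& v \notin C_next, v \notin term_next,
  e \in Ep_next v & beta / alpha * w v < \sum_(e' in Ep_next v) deal s e']].
Definition deal_next e :=
  if (e \in E) && (e \notin cov_next)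
  then (if stuck e then deal s e else alpha * deal s e) else deal s e.
Definition delta_next e :=
  if (e \in E) && (e \notin cov_next) then delta s e + deal_next e
  else delta s e.

Lemma stepE : step E f w eps alpha s =
  State C_next term_next cov_next Ep_next deal_next delta_next.
Proof. by []. Qed.

End Step.

Record invariant (s : state) : Prop := Invariant {
  inC_sub_term : inC s \subset term s;
  cov_notin_Ep : forall v e, e \in Ev v -> e \notin Ep s v -> e \in cov s;
  cov_at_term : forall v e, v \in term s -> e \in Ev v -> e \in cov s;
  deal_ge0 : forall e, 0 <= deal s e;
  sum_deal_le : forall v, v \notin term s ->
    \sum_(e in Ep s v) deal s e <= beta * w v;
  delta_ge0 : forall e, 0 <= delta s e;
  sum_delta_le : forall v, \sum_(e in Ev v) delta s e <= w v
}.
Arguments inC_sub_term {s}.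
Arguments cov_notin_Ep {s} _ {v e}.
Arguments cov_at_term {s} _ {v e}.
Arguments deal_ge0 {s}.
Arguments sum_deal_le {s} _ {v}.
Arguments delta_ge0 {s}.
Arguments sum_delta_le {s}.

Lemma invariant_init : invariant (init E f w eps).
Proof.
have sum_init_le v : \sum_(e in Ev v) beta * minratio e <= beta * w v.
  by rewrite -mulr_sumr ler_wpM2l ?sum_minratio_le.
split=> //= [v e -> //|v e|e|e|v].
- by rewrite inE.
- by rewrite mulr_ge0 ?minratio_ge0.
- by rewrite mulr_ge0 ?minratio_ge0.
- by rewrite (le_trans (sum_init_le v)) // ler_piMl.
Qed.

Section StepInvariant.
Variable s : state.
Hypothesis Is : invariant s.

Lemma C_next_sub_term_next : C_next s \subset term_next s.
Proof.
apply/subsetP => v /setUP[/(subsetP (inC_sub_term Is)) vt|vJ];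
  by rewrite /term_next !in_setU ?vt ?vJ ?orbT.
Qed.

Lemma notin_term_next {v} : v \notin term_next s ->
  (v \notin term s) && (v \notin joiners s).
Proof. by rewrite /term_next !in_setU !negb_or => /andP[/andP[-> ->]]. Qed.

Lemma Ep_next_sub v : Ep_next s v \subset Ep s v.
Proof. by rewrite /Ep_next; case: ifP => _; rewrite ?subsetDl. Qed.

Lemma cov_next_notin_Ep {v e} :
  e \in Ev v -> e \notin Ep_next s v -> e \in cov_next s.
Proof.
move=> ev; rewrite /Ep_next /cov_next in_setU.
case: ifP => _ e_notin; first by rewrite (cov_notin_Ep Is ev).
move: e_notin; rewrite in_setD negb_and negbK.
by case/orP=> [-> | /(cov_notin_Ep Is ev) ->]; rewrite ?orbT.
Qed.

Lemma cov_next_at_term {v e} :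
  v \in term_next s -> e \in Ev v -> e \in cov_next s.
Proof.
move=> vt ev; rewrite /cov_next in_setU.
move: vt; rewrite /term_next !in_setU => /orP[/orP[vt|vJ]|].
- by rewrite (cov_at_term Is vt ev).
- have [//|e_uncov /=] := boolP (e \in cov s).
  have [eEp|/(cov_notin_Ep Is ev)] := boolP (e \in Ep s v); last first.
    by rewrite (negbTE e_uncov).
  move: ev; rewrite inE => /andP[eE _].
  rewrite [e \in covered_now s]inE eE e_uncov /=.
  by apply/existsP; exists v; rewrite vJ.
- rewrite inE => /andP[_ /eqP Ep_nil].
  by rewrite -in_setU; apply: cov_next_notin_Ep ev _; rewrite Ep_nil inE.
Qed.

Lemma deal_next_ge0 e : 0 <= deal_next s e.
Proof.
have deal_e_ge0 := deal_ge0 Is e.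
rewrite /deal_next; case: ifP => // _; case: ifP => // _.
by rewrite mulr_ge0 ?(ltW alpha_gt0).
Qed.

Lemma deal_next_le e : deal_next s e <= alpha * deal s e.
Proof.
have deal_le : deal s e <= alpha * deal s e by rewrite ler_peMl ?(deal_ge0 Is).
by rewrite /deal_next; case: ifP => // _; case: ifP.
Qed.

Lemma deal_next_stuck e : stuck s e -> deal_next s e = deal s e.
Proof. by rewrite /deal_next => ->; case: ifP. Qed.

Lemma sum_deal_next_le {v} : v \notin term_next s ->
  \sum_(e in Ep_next s v) deal_next s e <= beta * w v.
Proof.
move=> v_live; have /andP[v_old _] := notin_term_next v_live.
have vC : v \notin C_next s.
  exact: contra (subsetP C_next_sub_term_next v) v_live.
have [v_stuck|v_raises] :=
  boolP (beta / alpha * w v < \sum_(e in Ep_next s v) deal s e).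
  rewrite (eq_bigr (deal s)) => [|e eEp]; last first.
    by apply: deal_next_stuck; apply/existsP; exists v; rewrite vC v_live eEp.
  apply: le_trans (sum_deal_le Is v_old).
  by apply: ler_sum_subset (Ep_next_sub v) _ => e _; apply: deal_ge0.
apply: (@le_trans _ _ (alpha * \sum_(e in Ep_next s v) deal s e)).
  by rewrite mulr_sumr ler_sum // => e _; apply: deal_next_le.
have -> : beta * w v = alpha * (beta / alpha * w v).
  by field; rewrite gt_eqF // alpha_gt0.
by rewrite ler_wpM2l ?(ltW alpha_gt0) // leNgt.
Qed.

Lemma delta_next_covered e : e \in cov_next s -> delta_next s e = delta s e.
Proof. by rewrite /delta_next => ->; rewrite andbF. Qed.

Lemma delta_next_ge0 e : 0 <= delta_next s e.
Proof.
rewrite /delta_next; case: ifP => _; last exact: delta_ge0.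
by rewrite addr_ge0 ?deal_next_ge0 ?(delta_ge0 Is).
Qed.

Lemma sum_delta_increment_le v :
  \sum_(e in Ev v) (delta_next s e - delta s e) <=
  \sum_(e in Ep_next s v) deal_next s e.
Proof.
rewrite (big_setID (Ep_next s v)) /= [X in _ + X]big1 ?addr0; last first.
  move=> e /setDP[ev eEp].
  by rewrite delta_next_covered ?subrr // (cov_next_notin_Ep ev).
apply: (@le_trans _ _ (\sum_(e in Ev v :&: Ep_next s v) deal_next s e)).
  apply: ler_sum => e _; rewrite /delta_next.
  by case: ifP => _; rewrite ?subrr ?deal_next_ge0 // addrAC subrr add0r.
by apply: ler_sum_subset (subsetIr _ _) _ => e _; apply: deal_next_ge0.
Qed.

Lemma sum_delta_next_le v : \sum_(e in Ev v) delta_next s e <= w v.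
Proof.
have [vt|v_live] := boolP (v \in term_next s).
  rewrite (eq_bigr (delta s)) ?(sum_delta_le Is) // => e ev.
  by rewrite delta_next_covered // (cov_next_at_term vt ev).
have /andP[v_old v_stays] := notin_term_next v_live.
have delta_lt : \sum_(e in Ev v) delta s e < (1 - beta) * w v.
  by move: v_stays; rewrite inE v_old /= ltNge.
have := le_trans (sum_delta_increment_le v) (sum_deal_next_le v_live).
rewrite sumrB; lra.
Qed.

Lemma invariant_step : invariant (step E f w eps alpha s).
Proof.
rewrite stepE; split=> /=.
- exact: C_next_sub_term_next.
- exact: @cov_next_notin_Ep.
- exact: @cov_next_at_term.
- exact: deal_next_ge0.
- exact: @sum_deal_next_le.
- exact: delta_next_ge0.
- exact: sum_delta_next_le.
Qed.

End StepInvariant.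

Lemma invariant_state_at i : invariant (state_at E f w eps alpha i).
Proof.
elim: i => [|i IHi]; first exact: invariant_init.
by rewrite /state_at iterS; apply: invariant_step.
Qed.

End Packing.

Theorem mainTheorem2 (R : realFieldType) (V : finType) (E : {set {set V}})
  (f : nat) (w : V -> R) (eps alpha : R)
  (hE : forall e, e \in E -> (e != set0) && (#|e| <= f)%N)
  (hw : forall v, 0 <= w v)
  (heps : 0 < eps <= 1)
  (halpha : 1 < alpha)
  (hDelta : (3 <= \max_(v : V) #|Ev E v|)%N) :
  forall i : nat,
    (forall v : V,
       \sum_(e in Ev E v) delta (state_at E f w eps alpha i) e <= w v) /\
    (forall e, e \in E -> 0 <= delta (state_at E f w eps alpha i) e).
Proof.
move=> i; have /andP[eps_gt0 _] := heps.
have inv := @invariant_state_at R V E f w eps alpha hw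
  (beta_ge0 f eps (ltW eps_gt0)) (beta_le1 f eps eps_gt0) (ltW halpha) i.
split=> [|e _]; [exact: sum_delta_le inv | exact: delta_ge0 inv e].
Qed.
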